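(* Assume $(\boldsymbol\Sigma,\sigma)$ is a primitive Markov subshift on a countable alphabet, with associated set $\mathbb F$. Let $A:\boldsymbol\Sigma\to\mathbb R$ be a bounded above and locally H\''older continuous potential such that $\inf A|_{\bigcup_{i\in\mathbb F}[i]}>-\infty$. Then there exists a unique minimal, nonnegative, bounded and locally H\''older continuous function $u_A:\boldsymbol\Sigma\to\mathbb R_+$ satisfying $$A+u_A-u_A\circ\sigma\le\beta_A ,$$ where minimality means: for every nonnegative continuous sub-action $u:\boldsymbol\Sigma\to\mathbb R_+$ (not necessarily locally H\''older continuous) one has $u_A\le u$.
   Context: Let $\mathbf M:\mathbb Z_+\times\mathbb Z_+\to\{0,1\}$ be a transition matrix. Put $\mathcal B_0=\{i:\mathbf M(i,j)=1\text{ for some }j\}$, $\mathcal B_n=\{i:\mathbf M(i,j)=1\text{ for some }j\in\mathcal B_{n-1}\}$. $\mathbf M$ is primitive if there exist $\mathbb F\subseteq\mathbb Z_+$ and an integer $K_0\ge0$ such that for all $i,j\in\bigcap_{n\ge0}\mathcal B_n$ there are $\ell_1,\dots,\ell_{K_0}\in\mathbb F$ with $\mathbf M(i,\ell_1)\mathbf M(\ell_1,\ell_2)\cdots\mathbf M(\ell_{K_0},j)=1$. $\boldsymbol\Sigma=\{\mathbf x\in\mathbb Z_+^{\mathbb Z_+}:\mathbf M(x_j,x_{j+1})=1\ \forall j\}$ with metric $d(\mathbf x,\mathbf y)=\lambda^{\min\{j:x_j\neq y_j\}}$, $\lambda\in(0,1)$ fixed; $\sigma$ the left shift; $[i]=\{\mathbf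 x:x_0=i\}$. $\mathcal M_\sigma$ = $\sigma$-invariant Borel probabilities; $\beta_A=\sup_{\mu\in\mathcal M_\sigma}\int A\,d\mu$. $\mathrm{Var}_k(A)=\sup\{A(\mathbf x)-A(\mathbf y):d(\mathbf x,\mathbf y)\le\lambda^k\}$; $A$ is locally H\''older continuous if there is $H_A>0$ with $\mathrm{Var}_k(A)\le H_A\lambda^k$ for all $k\ge1$. A sub-action for $A$ is a continuous $u:\boldsymbol\Sigma\to\mathbb R$ with $A+u-u\circ\sigma\le\beta_A$ everywhere. *)

From Stdlib Require Import Reals Lra Lia Classical.
Open Scope R_scope.

(* Transition matrix on the countable alphabet Z_+ (modelled by nat). *)
Definition TM := nat -> nat -> bool.

Fixpoint Bset (M : TM) (n : nat) (i : nat) : Prop :=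
  match n with
  | O => exists j, M i j = true
  | S n' => exists j, Bset M n' j /\ M i j = true
  end.

Definition Binf (M : TM) (i : nat) : Prop := forall n, Bset M n i.

(* M is primitive with associated set F and integer K0:
   for all i, j in the intersection of the B_n there are l_1..l_K0 in F
   with M(i,l_1) M(l_1,l_2) ... M(l_K0,j) = 1  (encoded as a path
   l 0 = i, l 1, ..., l K0, l (K0+1) = j). *)
Definition primitive_with (M : TM) (F : nat -> Prop) (K0 : nat) : Prop :=
  forall i j, Binf M i -> Binf M j ->
    exists l : nat -> nat,
      l O = i /\ l (S K0) = j /\
      (forall m, (m <= K0)%nat -> M (l m) (l (S m)) = true) /\
      (forall m, (1 <= m)%nat -> (m <= K0)%nat -> F (l m)).

Record Sigma (M : TM) := mkSigma {
  seqS :> nat -> nat;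
  admS : forall j, M (seqS j) (seqS (S j)) = true }.
Arguments seqS {M}.
Arguments admS {M}.

Definition shift {M : TM} (x : Sigma M) : Sigma M :=
  mkSigma M (fun j => x (S j)) (fun j => admS x (S j)).

(* d(x,y) <= lam^k  iff  x_j = y_j for all j < k  (since 0 < lam < 1) *)
Definition agree {M : TM} (k : nat) (x y : Sigma M) : Prop :=
  forall j, (j < k)%nat -> x j = y j.

Definition locally_holder {M : TM} (lam : R) (A : Sigma M -> R) : Prop :=
  exists H, 0 < H /\
    forall k, (1 <= k)%nat -> forall x y, agree k x y -> A x - A y <= H * lam ^ k.

Definition continuous_S {M : TM} (u : Sigma M -> R) : Prop :=
  forall x eps, 0 < eps -> exists k, forall y, agree k x y -> Rabs (u y - u x) < eps.

Definition is_open {M : TM} (U : Sigma M -> Prop) : Prop :=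
  forall x, U x -> exists k, forall y, agree k x y -> U y.

Inductive borel (M : TM) : (Sigma M -> Prop) -> Prop :=
| borel_open : forall U, is_open U -> borel M U
| borel_compl : forall E, borel M E -> borel M (fun x => ~ E x)
| borel_union : forall E : nat -> Sigma M -> Prop,
    (forall n, borel M (E n)) -> borel M (fun x => exists n, E n x).

(* Borel probability measures (values on non-Borel sets are irrelevant) *)
Definition is_prob_measure {M : TM} (mu : (Sigma M -> Prop) -> R) : Prop :=
  (forall E, borel M E -> 0 <= mu E) /\
  mu (fun _ => True) = 1 /\
  (forall E : nat -> Sigma M -> Prop,
     (forall n, borel M (E n)) ->
     (forall n m, n <> m -> forall x, E n x -> E m x -> False) ->
     infinite_sum (fun n => mu (E n)) (mu (fun x => exists n, E n x))).

Definition is_invariant {M : TM} (mu : (Sigma M -> Prop) -> R) : Prop :=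
  forall E, borel M E -> mu (fun x => E (shift x)) = mu E.

Definition lower_sum {M : TM} (mu : (Sigma M -> Prop) -> R) (g : Sigma M -> R)
  (s : R) : Prop :=
  exists (n : nat) (a : nat -> R) (E : nat -> Sigma M -> Prop),
    (forall i, (i <= n)%nat ->
       borel M (E i) /\ 0 <= a i /\ (forall x, E i x -> a i <= g x)) /\
    (forall i j, (i <= n)%nat -> (j <= n)%nat -> i <> j ->
       forall x, E i x -> E j x -> False) /\
    s = sum_f_R0 (fun i => a i * mu (E i)) n.

(* Lebesgue integral of a nonnegative function, when finite *)
Definition integral_nonneg {M : TM} (mu : (Sigma M -> Prop) -> R)
  (g : Sigma M -> R) (I : R) : Prop := is_lub (lower_sum mu g) I.

Definition measurable {M : TM} (f : Sigma M -> R) : Prop :=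
  forall a, borel M (fun x => f x <= a).

Definition integral {M : TM} (mu : (Sigma M -> Prop) -> R) (f : Sigma M -> R)
  (r : R) : Prop :=
  measurable f /\
  exists Ip In,
    integral_nonneg mu (fun x => Rmax (f x) 0) Ip /\
    integral_nonneg mu (fun x => Rmax (- f x) 0) In /\
    r = Ip - In.

(* { int A dmu : mu in M_sigma }  (measures with int A dmu = -oo omitted:
   they do not affect the supremum) *)
Definition BetaSet {M : TM} (A : Sigma M -> R) (r : R) : Prop :=
  exists mu, is_prob_measure mu /\ is_invariant mu /\ integral mu A r.

(* t <= beta_A = sup BetaSet (supremum in the extended reals):
   t is below every upper bound of BetaSet. *)
Definition le_beta {M : TM} (A : Sigma M -> R) (t : R) : Prop :=
  forall b, is_upper_bound (BetaSet A) b -> t <= b.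

Definition sub_action {M : TM} (A : Sigma M -> R) (u : Sigma M -> R) : Prop :=
  continuous_S u /\ forall x, le_beta A (A x + u x - u (shift x)).

From Stdlib Require Import Reals Lra Lia Classical ClassicalEpsilon.
From Stdlib Require Import FunctionalExtensionality PropExtensionality ProofIrrelevance.
Open Scope R_scope.

(** Let [β = β_A].  The minimal sub-action is
      [u_A(x) = sup { S_n(A - β)(y) | n ≥ 0, σ^n y = x }],
    the supremum of the Birkhoff sums of [A - β] over all preimages of [x].
    - It is [≥ 0] (take [n = 0]) and is a sub-action, since a preimage of [x]
      extends to a preimage of [σ x].
    - It lies below every nonnegative sub-action [u], because
      [S_n(A - β)(y) ≤ u(σ^n y) - u(y)] by telescoping.
    - It is finite and bounded: primitivity closes any orbit segment into a
      periodic orbit through [F], whose orbit average is an invariant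
      integral [≤ β], while [A] is bounded below on the cylinders of [F];
      bounded distortion of Hölder Birkhoff sums compares the two orbits.
    - It is locally Hölder, again by bounded distortion after splicing.
    Uniqueness follows from minimality. *)

(** Finite sums with [n] terms: [fsum n f = f 0 + ... + f (n-1)].  Birkhoff
    sums and orbit averages are naturally sums with [n] terms. *)
Fixpoint fsum (n : nat) (f : nat -> R) : R :=
  match n with O => 0 | S n' => fsum n' f + f n' end.

Lemma fsum_ext n f g : (forall i, (i < n)%nat -> f i = g i) -> fsum n f = fsum n g.
Proof.
  induction n as [|n IH]; intros Hfg; simpl; [reflexivity|].
  rewrite IH by (intros; apply Hfg; lia). rewrite Hfg by lia. reflexivity.
Qed.

Lemma fsum_plus n f g : fsum n (fun i => f i + g i) = fsum n f + fsum n g.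
Proof. induction n as [|n IH]; simpl; [lra|]. rewrite IH; lra. Qed.

Lemma fsum_minus n f g : fsum n (fun i => f i - g i) = fsum n f - fsum n g.
Proof. induction n as [|n IH]; simpl; [lra|]. rewrite IH; lra. Qed.

Lemma fsum_scal n c f : fsum n (fun i => c * f i) = c * fsum n f.
Proof. induction n as [|n IH]; simpl; [lra|]. rewrite IH; lra. Qed.

Lemma fsum_const n c : fsum n (fun _ => c) = INR n * c.
Proof. induction n as [|n IH]; simpl fsum; [simpl; lra|]. rewrite IH, S_INR; lra. Qed.

Lemma fsum_le n f g : (forall i, (i < n)%nat -> f i <= g i) -> fsum n f <= fsum n g.
Proof.
  induction n as [|n IH]; intros Hfg; simpl; [lra|].
  assert (f n <= g n) by (apply Hfg; lia).
  assert (fsum n f <= fsum n g) by (apply IH; intros; apply Hfg; lia). lra.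
Qed.

Lemma fsum_exchange n m (f : nat -> nat -> R) :
  fsum n (fun i => fsum m (f i)) = fsum m (fun j => fsum n (fun i => f i j)).
Proof.
  induction n as [|n IH]; simpl.
  - induction m; simpl; lra.
  - rewrite IH, <- fsum_plus. reflexivity.
Qed.

Lemma fsum_split n K f : fsum (n + K) f = fsum n f + fsum K (fun k => f (n + k)%nat).
Proof.
  induction K as [|K IH]; simpl; [rewrite Nat.add_0_r; lra|].
  rewrite Nat.add_succ_r; simpl. rewrite IH. lra.
Qed.

Lemma fsum_shift p f : fsum p (fun k => f (S k)) = fsum p f - f 0%nat + f p.
Proof. induction p as [|p IH]; simpl; [lra|]. rewrite IH. lra. Qed.

(** The Stdlib sum [sum_f_R0 f n] has [n+1] terms. *)
Lemma sum_f_R0_fsum f n : sum_f_R0 f n = fsum (S n) f.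
Proof. induction n as [|n IH]; simpl; [lra|]. simpl in IH. rewrite IH. reflexivity. Qed.

Lemma infinite_sum_plus f g l1 l2 : infinite_sum f l1 -> infinite_sum g l2 ->
  infinite_sum (fun n => f n + g n) (l1 + l2).
Proof.
  intros H1 H2. apply (Un_cv_ext (fun n => sum_f_R0 f n + sum_f_R0 g n)).
  - intros n. symmetry. apply sum_plus.
  - exact (CV_plus _ _ _ _ H1 H2).
Qed.

Lemma infinite_sum_scal f l c : infinite_sum f l -> infinite_sum (fun n => c * f n) (c * l).
Proof.
  intros H. apply (Un_cv_ext (fun n => c * sum_f_R0 f n)).
  - intros n. rewrite scal_sum. apply sum_eq. intros; ring.
  - apply (CV_mult (fun _ => c)); [|exact H].
    intros eps Heps. exists 0%nat. intros n _. unfold Rdist. rewrite Rminus_diag, Rabs_R0. lra.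
Qed.

Lemma infinite_sum_fsum p (f : nat -> nat -> R) (l : nat -> R) :
  (forall k, (k < p)%nat -> infinite_sum (fun n => f n k) (l k)) ->
  infinite_sum (fun n => fsum p (f n)) (fsum p l).
Proof.
  induction p as [|p IH]; simpl; intros H.
  - intros eps He. exists 0%nat. intros n _. rewrite sum_f_R0_fsum, fsum_const.
    unfold Rdist. rewrite Rmult_0_r, Rminus_diag, Rabs_R0. lra.
  - apply infinite_sum_plus; [apply IH; intros; apply H; lia | apply H; lia].
Qed.

Definition indR (P : Prop) : R := if excluded_middle_informative P then 1 else 0.

Lemma indR_nonneg P : 0 <= indR P.
Proof. unfold indR; destruct excluded_middle_informative; lra. Qed.

Lemma indR_true (P : Prop) : P -> indR P = 1.
Proof. unfold indR; destruct excluded_middle_informative; tauto. Qed.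

Lemma indR_false (P : Prop) : ~ P -> indR P = 0.
Proof. unfold indR; destruct excluded_middle_informative; tauto. Qed.

Lemma fsum_indR_none n f (Q : nat -> Prop) : (forall i, (i < n)%nat -> ~ Q i) ->
  fsum n (fun i => f i * indR (Q i)) = 0.
Proof.
  induction n as [|n IH]; simpl; intros H; [lra|].
  rewrite IH by (intros; apply H; lia). rewrite indR_false by (apply H; lia). lra.
Qed.

Lemma fsum_indR_unique n f (Q : nat -> Prop) i0 : (i0 < n)%nat -> Q i0 ->
  (forall i, (i < n)%nat -> Q i -> i = i0) ->
  fsum n (fun i => f i * indR (Q i)) = f i0.
Proof.
  induction n as [|n IH]; simpl; intros Hi Hq Hu; [lia|].
  destruct (Nat.eq_dec i0 n) as [->|Hne].
  - rewrite fsum_indR_none, indR_true by (auto; intros i Hi' Hq'; specialize (Hu i ltac:(lia) Hq'); lia).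
    lra.
  - rewrite IH by (auto; try lia; intros; apply Hu; auto; lia).
    rewrite indR_false; [lra|]. intro Hq'. specialize (Hu n ltac:(lia) Hq'). lia.
Qed.

Lemma first_witness (P : nat -> Prop) k : P k ->
  exists i, (i <= k)%nat /\ P i /\ forall j, (j < i)%nat -> ~ P j.
Proof.
  induction k as [k IH] using (well_founded_induction Wf_nat.lt_wf). intros Hk.
  destruct (classic (exists j, (j < k)%nat /\ P j)) as [[j [Hj Pj]]|Hnone].
  - destruct (IH j Hj Pj) as [i [Hi Hrest]]. exists i. split; [lia|exact Hrest].
  - exists k. repeat split; auto. intros j Hj Pj. eauto.
Qed.

Lemma Sigma_ext {M : TM} (x y : Sigma M) : (forall j, x j = y j) -> x = y.
Proof.
  destruct x as [x hx], y as [y hy]; simpl; intros H.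
  assert (x = y) by (apply functional_extensionality; auto). subst.
  f_equal. apply proof_irrelevance.
Qed.

Fixpoint iterS {M : TM} (n : nat) (x : Sigma M) : Sigma M :=
  match n with O => x | S n' => shift (iterS n' x) end.

Lemma iterS_app {M : TM} n (x : Sigma M) j : iterS n x j = x (n + j)%nat.
Proof. revert j; induction n as [|n IH]; intros j; simpl; [reflexivity|]. rewrite IH. f_equal. lia. Qed.

(** Every symbol occurring in a point lies in [⋂ B_n]: it starts an
    infinite admissible word. *)
Lemma Binf_coord (M : TM) (x : Sigma M) j : Binf M (x j).
Proof.
  intros n. revert j. induction n as [|n IH]; intros j; simpl; exists (x (S j)).
  - apply admS.
  - split; [apply IH | apply admS].
Qed.

Lemma splice (M : TM) (y x' : Sigma M) n : y n = x' 0%nat ->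
  exists y' : Sigma M, (forall j, (j < n)%nat -> y' j = y j) /\ iterS n y' = x'.
Proof.
  intros Hyx.
  unshelve eexists (mkSigma M (fun j => if (j <? n)%nat then y j else x' (j - n)%nat) _).
  - intros j. cbv beta. destruct (Nat.ltb_spec j n), (Nat.ltb_spec (S j) n).
    + apply admS.
    + replace j with (n - 1)%nat by lia. replace (S (n - 1) - n)%nat with 0%nat by lia.
      rewrite <- Hyx. replace n with (S (n - 1)) at 2 by lia. apply admS.
    + lia.
    + replace (S j - n)%nat with (S (j - n)) by lia. apply admS.
  - split.
    + intros j Hj. simpl. destruct (Nat.ltb_spec j n); [reflexivity|lia].
    + apply Sigma_ext. intros j. rewrite iterS_app. simpl.
      destruct (Nat.ltb_spec (n + j) n); [lia|]. f_equal. lia.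
Qed.

Lemma holder_continuous {M : TM} lam (u : Sigma M -> R) :
  0 < lam < 1 -> locally_holder lam u -> continuous_S u.
Proof.
  intros Hl [H [HH Hu]] x eps He.
  destruct (pow_lt_1_zero lam ltac:(rewrite Rabs_right; lra) (eps / H)) as [N HN].
  { apply Rdiv_lt_0_compat; lra. }
  specialize (HN (S N) ltac:(lia)). rewrite Rabs_right in HN by (apply Rle_ge, pow_le; lra).
  assert (Hsmall : H * lam ^ S N < eps).
  { apply Rmult_lt_compat_l with (r := H) in HN; [|lra].
    replace (H * (eps / H)) with eps in HN by (field; lra). lra. }
  exists (S N). intros y Hy.
  assert (h1 := Hu (S N) ltac:(lia) x y Hy).
  assert (h2 := Hu (S N) ltac:(lia) y x ltac:(intros j Hj; symmetry; apply Hy; auto)).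
  apply Rabs_def1; lra.
Qed.

Lemma borel_ext {M : TM} (P Q : Sigma M -> Prop) :
  (forall x, P x <-> Q x) -> borel M P -> borel M Q.
Proof.
  intros H B.
  assert (P = Q) as <-; [|exact B].
  apply functional_extensionality; intros; apply propositional_extensionality; auto.
Qed.

Lemma borel_true {M : TM} : borel M (fun _ => True).
Proof. apply borel_open. intros x _. exists 0%nat. auto. Qed.

Lemma borel_and {M : TM} (P Q : Sigma M -> Prop) :
  borel M P -> borel M Q -> borel M (fun x => P x /\ Q x).
Proof.
  intros HP HQ.
  set (E := fun n : nat => match n with O => fun y => ~ P y | _ => fun y => ~ Q y end).
  apply borel_ext with (P := fun x => ~ exists n, E n x).
  - intros x; split.
    + intros h; split; apply NNPP; intros h'; apply h; [exists 0%nat | exists 1%nat]; exact h'.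
    + intros [hp hq] [[|n] h]; auto.
  - apply borel_compl, borel_union. intros [|n]; apply borel_compl; assumption.
Qed.

Lemma borel_neq {M : TM} (w : Sigma M) : borel M (fun x => x <> w).
Proof.
  apply borel_open. intros x Hx.
  destruct (classic (exists j, x j <> w j)) as [[j Hj]|Hn].
  - exists (S j). intros y Hy ->. apply Hj, Hy. lia.
  - exfalso. apply Hx, Sigma_ext. intros j. apply NNPP. eauto.
Qed.

Lemma borel_eq {M : TM} (w : Sigma M) : borel M (fun x => x = w).
Proof.
  apply borel_ext with (P := fun x => ~ (fun y => y <> w) x).
  - intros x; simpl; split; [apply NNPP | tauto].
  - apply borel_compl, borel_neq.
Qed.

Lemma borel_avoid {M : TM} (w : nat -> Sigma M) i :
  borel M (fun x => forall j, (j < i)%nat -> x <> w j).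
Proof.
  induction i as [|i IH].
  - apply borel_ext with (P := fun _ => True); [split; intros; [lia|auto]|apply borel_true].
  - apply borel_ext with (P := fun x => (forall j, (j < i)%nat -> x <> w j) /\ x <> w i).
    + intros x; split.
      * intros [h1 h2] j Hj. destruct (Nat.eq_dec j i) as [->|]; [auto|apply h1; lia].
      * intros h; split; auto.
    + apply borel_and; [exact IH | apply borel_neq].
Qed.

Lemma continuous_measurable {M : TM} (A : Sigma M -> R) : continuous_S A -> measurable A.
Proof.
  intros HA a.
  apply borel_ext with (P := fun x => ~ (fun y => a < A y) x); [intros x; simpl; lra|].
  apply borel_compl, borel_open. intros x Hx.
  destruct (HA x (A x - a) ltac:(lra)) as [k Hk]. exists k. intros y Hy.
  specialize (Hk y Hy). apply Rabs_def2 in Hk. lra.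
Qed.

Definition empirical {M : TM} (p : nat) (w : nat -> Sigma M) (E : Sigma M -> Prop) : R :=
  / INR p * fsum p (fun k => indR (E (w k))).

Lemma indR_union {M : TM} (E : nat -> Sigma M -> Prop) x :
  (forall n m, n <> m -> forall x, E n x -> E m x -> False) ->
  infinite_sum (fun n => indR (E n x)) (indR (exists n, E n x)).
Proof.
  intros Hdisj eps He.
  destruct (classic (exists n, E n x)) as [[n0 H0]|Hnone].
  - exists n0. intros n Hn. rewrite sum_f_R0_fsum, (indR_true _ (ex_intro _ n0 H0)).
    rewrite (fsum_ext _ _ (fun i => 1 * indR (E i x))) by (intros; ring).
    rewrite (fsum_indR_unique _ _ _ n0); [| lia | exact H0 |].
    + unfold Rdist. rewrite Rminus_diag, Rabs_R0. lra.
    + intros i _ Hi. destruct (Nat.eq_dec i n0); [assumption|]. exfalso; eapply Hdisj; eauto.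
  - exists 0%nat. intros n _. rewrite sum_f_R0_fsum, (indR_false _ Hnone).
    rewrite (fsum_ext _ _ (fun i => 1 * indR (E i x))) by (intros; ring).
    rewrite fsum_indR_none by (intros i _ Hi; eauto).
    unfold Rdist. rewrite Rminus_diag, Rabs_R0. lra.
Qed.

Lemma empirical_prob {M : TM} p (w : nat -> Sigma M) : (1 <= p)%nat -> is_prob_measure (empirical p w).
Proof.
  intros Hp. assert (Hpp : 0 < INR p) by (apply lt_0_INR; lia).
  split; [|split].
  - intros E _. apply Rmult_le_pos; [left; apply Rinv_0_lt_compat; exact Hpp|].
    rewrite <- (Rmult_0_r (INR p)), <- fsum_const.
    apply fsum_le; intros; apply indR_nonneg.
  - unfold empirical. rewrite (fsum_ext _ _ (fun _ => 1)) by (intros; apply indR_true; auto).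
    rewrite fsum_const. field. lra.
  - intros E _ Hdisj. apply infinite_sum_scal, infinite_sum_fsum.
    intros k _. apply indR_union; exact Hdisj.
Qed.

Lemma empirical_orbit_invariant {M : TM} p (z : Sigma M) :
  iterS p z = z -> is_invariant (empirical p (fun k => iterS k z)).
Proof.
  intros Hz E _. unfold empirical. f_equal.
  change (fsum p (fun k => indR (E (iterS (S k) z))) = fsum p (fun k => indR (E (iterS k z)))).
  rewrite (fsum_shift p (fun k => indR (E (iterS k z)))), Hz. simpl. ring.
Qed.

Lemma empirical_simple_sum {M : TM} p (w : nat -> Sigma M) n (a : nat -> R) E :
  sum_f_R0 (fun i => a i * empirical p w (E i)) n =
  / INR p * fsum p (fun k => fsum (S n) (fun i => a i * indR (E i (w k)))).
Proof.
  rewrite sum_f_R0_fsum. unfold empirical.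
  rewrite (fsum_ext _ _ (fun i => / INR p * fsum p (fun k => a i * indR (E i (w k))))).
  - rewrite fsum_scal, fsum_exchange. reflexivity.
  - intros i _. rewrite fsum_scal. ring.
Qed.

Lemma simple_below (X : Type) n (a : nat -> R) (E : nat -> X -> Prop) (g : X -> R) x :
  0 <= g x ->
  (forall i, (i <= n)%nat -> forall y, E i y -> a i <= g y) ->
  (forall i j, (i <= n)%nat -> (j <= n)%nat -> i <> j -> E i x -> E j x -> False) ->
  fsum (S n) (fun i => a i * indR (E i x)) <= g x.
Proof.
  intros Hg Ha Hdisj.
  destruct (classic (exists i, (i <= n)%nat /\ E i x)) as [[i0 [Hi0 HE]]|Hnone].
  - rewrite (fsum_indR_unique _ _ _ i0); [apply Ha; auto | lia | exact HE |].
    intros i Hi HEi. destruct (Nat.eq_dec i i0); [assumption|].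
    exfalso. apply (Hdisj i i0); auto; lia.
  - rewrite fsum_indR_none; [exact Hg|]. intros i Hi HEi. apply Hnone. exists i. split; [lia|exact HEi].
Qed.

Definition first_occurrence {M : TM} (w : nat -> Sigma M) (i : nat) (x : Sigma M) : Prop :=
  x = w i /\ forall j, (j < i)%nat -> x <> w j.

Lemma first_occurrence_disjoint {M : TM} (w : nat -> Sigma M) i j x :
  i <> j -> first_occurrence w i x -> first_occurrence w j x -> False.
Proof.
  intros Hij [Hx1 Hx2] [Hy1 Hy2]. destruct (Nat.lt_ge_cases i j).
  - exact (Hy2 i ltac:(lia) Hx1).
  - exact (Hx2 j ltac:(lia) Hy1).
Qed.

Lemma first_occurrence_sum {M : TM} (w : nat -> Sigma M) (g : Sigma M -> R) p k :
  (k < p)%nat -> fsum p (fun i => g (w i) * indR (first_occurrence w i (w k))) = g (w k).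
Proof.
  intros Hk.
  destruct (first_witness (fun i => w i = w k) k eq_refl) as [i0 [Hi0 [Hw Hmin]]].
  rewrite (fsum_indR_unique _ _ _ i0); [rewrite Hw; reflexivity | lia | |].
  - split; [congruence|]. intros j Hj h. apply (Hmin j Hj). congruence.
  - intros i _ [h1 h2]. destruct (Nat.lt_total i i0) as [h|[h|h]]; [|exact h|].
    + exfalso. apply (Hmin i h). congruence.
    + exfalso. apply (h2 i0 h). congruence.
Qed.

Lemma empirical_integral_nonneg {M : TM} p (w : nat -> Sigma M) (g : Sigma M -> R) :
  (1 <= p)%nat -> (forall x, 0 <= g x) ->
  integral_nonneg (empirical p w) g (/ INR p * fsum p (fun k => g (w k))).
Proof.
  intros Hp Hg. assert (Hpinv : 0 <= / INR p) by (left; apply Rinv_0_lt_compat, lt_0_INR; lia).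
  split.
  - intros s [n [a [E [HE [Hdisj ->]]]]]. rewrite empirical_simple_sum.
    apply Rmult_le_compat_l; [exact Hpinv|]. apply fsum_le. intros k _.
    apply simple_below; [apply Hg | intros i Hi; apply HE, Hi | intros i j Hi Hj Hij; apply (Hdisj i j Hi Hj Hij)].
  - intros b Hb. apply Hb.
    exists (p - 1)%nat, (fun i => g (w i)), (first_occurrence w). split; [|split].
    + intros i _. split; [|split; [apply Hg | intros x [-> _]; lra]].
      apply borel_and; [apply borel_eq | apply borel_avoid].
    + intros i j _ _ Hij x. apply first_occurrence_disjoint, Hij.
    + rewrite empirical_simple_sum. replace (S (p - 1)) with p by lia.
      f_equal. apply fsum_ext. intros k Hk. symmetry. apply first_occurrence_sum, Hk.
Qed.

Lemma periodic_average_in_BetaSet {M : TM} lam p (z : Sigma M) (A : Sigma M -> R) :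
  0 < lam < 1 -> locally_holder lam A -> (1 <= p)%nat -> iterS p z = z ->
  BetaSet A (/ INR p * fsum p (fun k => A (iterS k z))).
Proof.
  intros Hl HA Hp Hz. exists (empirical p (fun k => iterS k z)).
  split; [apply empirical_prob, Hp|]. split; [apply empirical_orbit_invariant, Hz|].
  split; [apply continuous_measurable, (holder_continuous lam); assumption|].
  do 2 eexists. split; [|split].
  - apply empirical_integral_nonneg; [exact Hp | intros; apply Rmax_r].
  - apply empirical_integral_nonneg; [exact Hp | intros; apply Rmax_r].
  - rewrite <- Rmult_minus_distr_l, <- fsum_minus. f_equal. apply fsum_ext.
    intros. unfold Rmax. destruct Rle_dec, Rle_dec; lra.
Qed.

Lemma periodic_point (M : TM) (c : nat -> nat) p : (1 <= p)%nat -> c p = c 0%nat ->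
  (forall j, (j < p)%nat -> M (c j) (c (S j)) = true) ->
  exists z : Sigma M, forall j, z j = c (j mod p)%nat.
Proof.
  intros Hp Hc Hm.
  unshelve eexists (mkSigma M (fun j => c (j mod p)%nat) _); [|reflexivity].
  intros j. pose proof (Nat.mod_upper_bound j p ltac:(lia)) as Hr.
  replace (S j) with (j + 1)%nat by lia. rewrite <- Nat.Div0.add_mod_idemp_l.
  destruct (Nat.lt_ge_cases (j mod p + 1) p) as [Hlt|Hge].
  - rewrite (Nat.mod_small (j mod p + 1)) by exact Hlt. rewrite Nat.add_1_r. apply Hm, Hr.
  - replace (j mod p + 1)%nat with p by lia. rewrite Nat.Div0.mod_same, <- Hc.
    replace p with (S (j mod p)) at 2 by lia. apply Hm, Hr.
Qed.

(** Closing lemma (this is where primitivity enters): any initial word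
    [y 0 ... y (m-1)] is the beginning of a periodic point of period [m + K0]
    whose remaining [K0] symbols lie in [F]. *)
Lemma closing (M : TM) F K0 (y : Sigma M) m : primitive_with M F K0 -> (1 <= m)%nat ->
  exists z : Sigma M, iterS (m + K0) z = z /\ (forall j, (j < m)%nat -> z j = y j) /\
    (forall k, (k < K0)%nat -> F (z (m + k)%nat)).
Proof.
  intros Hpr Hm.
  destruct (Hpr (y (m - 1)%nat) (y 0%nat) (Binf_coord M y _) (Binf_coord M y _))
    as [l [Hl0 [Hl1 [HlM HlF]]]].
  set (c := fun j => if (j <? m)%nat then y j else l (j - m + 1)%nat).
  destruct (periodic_point M c (m + K0) ltac:(lia)) as [z Hz].
  - unfold c. destruct (Nat.ltb_spec (m + K0) m), (Nat.ltb_spec 0 m); try lia.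
    rewrite <- Hl1. f_equal. lia.
  - intros j Hj. unfold c. destruct (Nat.ltb_spec j m), (Nat.ltb_spec (S j) m); try lia.
    + apply admS.
    + replace j with (m - 1)%nat by lia. rewrite <- Hl0.
      replace (S (m - 1) - m + 1)%nat with 1%nat by lia. apply HlM. lia.
    + replace (S j - m + 1)%nat with (S (j - m + 1)) by lia. apply HlM. lia.
  - exists z. split; [|split].
    + apply Sigma_ext. intros j. rewrite iterS_app, !Hz.
      replace (m + K0 + j)%nat with (j + 1 * (m + K0))%nat by lia.
      rewrite Nat.Div0.mod_add. reflexivity.
    + intros j Hj. rewrite Hz, Nat.mod_small by lia. unfold c.
      destruct (Nat.ltb_spec j m); [reflexivity|lia].
    + intros k Hk. rewrite Hz, Nat.mod_small by lia. unfold c.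
      destruct (Nat.ltb_spec (m + k) m); [lia|]. apply HlF; lia.
Qed.

Lemma geometric_tail lam m : 0 < lam < 1 -> fsum m (fun i => lam ^ (m - i)) <= lam / (1 - lam).
Proof.
  intros Hl. induction m as [|m IH].
  - simpl. apply Rmult_le_pos; [lra|]. left; apply Rinv_0_lt_compat; lra.
  - rewrite (fsum_ext _ _ (fun i => lam * lam ^ (m - i)))
      by (intros i Hi; replace (S m - i)%nat with (S (m - i)) by lia; reflexivity).
    simpl fsum. rewrite fsum_scal, Nat.sub_diag. simpl pow.
    assert (lam * fsum m (fun i => lam ^ (m - i)) <= lam * (lam / (1 - lam)))
      by (apply Rmult_le_compat_l; lra).
    assert (lam * (lam / (1 - lam)) + lam * 1 = lam / (1 - lam)) by (field; lra). lra.
Qed.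

Lemma bounded_distortion (M : TM) lam H (A : Sigma M -> R) : 0 < lam < 1 -> 0 < H ->
  (forall k, (1 <= k)%nat -> forall x y, agree k x y -> A x - A y <= H * lam ^ k) ->
  forall m k (y y' : Sigma M), (forall j, (j < m + k)%nat -> y j = y' j) ->
  fsum m (fun i => A (iterS i y)) - fsum m (fun i => A (iterS i y')) <= H * lam ^ k * (lam / (1 - lam)).
Proof.
  intros Hl HH HA m k y y' Hyy. rewrite <- fsum_minus.
  apply Rle_trans with (fsum m (fun i => H * lam ^ k * lam ^ (m - i))).
  - apply fsum_le. intros i Hi. rewrite Rmult_assoc, <- pow_add.
    replace (k + (m - i))%nat with (m - i + k)%nat by lia.
    apply HA; [lia|]. intros j Hj. rewrite !iterS_app. apply Hyy. lia.
  - rewrite fsum_scal. apply Rmult_le_compat_l; [apply Rmult_le_pos; [lra|apply pow_le; lra]|].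
    apply geometric_tail, Hl.
Qed.

Definition birkhoff {M : TM} (A : Sigma M -> R) (beta : R) (n : nat) (y : Sigma M) : R :=
  fsum n (fun i => A (iterS i y) - beta).

Lemma birkhoff_eq {M : TM} (A : Sigma M -> R) beta n y :
  birkhoff A beta n y = fsum n (fun i => A (iterS i y)) - INR n * beta.
Proof. unfold birkhoff. rewrite fsum_minus, fsum_const. reflexivity. Qed.

Lemma periodic_birkhoff_le {M : TM} lam (A : Sigma M -> R) beta p z :
  0 < lam < 1 -> locally_holder lam A -> (forall r, BetaSet A r -> r <= beta) ->
  (1 <= p)%nat -> iterS p z = z -> fsum p (fun k => A (iterS k z)) <= INR p * beta.
Proof.
  intros Hl HA Hbeta Hp Hz.
  assert (Hpp : 0 < INR p) by (apply lt_0_INR; lia).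
  pose proof (Hbeta _ (periodic_average_in_BetaSet lam p z A Hl HA Hp Hz)) as Havg.
  apply Rmult_le_compat_l with (r := INR p) in Havg; [|lra].
  rewrite <- Rmult_assoc, Rinv_r, Rmult_1_l in Havg; lra.
Qed.

(** Uniform upper bound on the Birkhoff sums of [A - β]: close the orbit
    segment of [y] through [F] in [K0] steps, where [A ≥ c0], and compare the
    two orbits by bounded distortion. *)
Lemma birkhoff_bounded (M : TM) lam F K0 (A : Sigma M -> R) H c0 beta :
  0 < lam < 1 -> 0 < H -> primitive_with M F K0 ->
  (forall k, (1 <= k)%nat -> forall x y, agree k x y -> A x - A y <= H * lam ^ k) ->
  (forall x : Sigma M, F (x 0%nat) -> c0 <= A x) ->
  (forall r, BetaSet A r -> r <= beta) ->
  forall n y, birkhoff A beta n y <= Rmax 0 (INR K0 * (beta - c0) + H * (lam / (1 - lam))).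
Proof.
  intros Hl HH Hpr HA Hc Hbeta n y. destruct n as [|n]; [apply Rmax_l|].
  apply Rle_trans with (2 := Rmax_r _ _).
  destruct (closing M F K0 y (S n) Hpr ltac:(lia)) as [z [Hz [Hzy HzF]]].
  assert (Hper := periodic_birkhoff_le lam A beta (S n + K0) z Hl
                    ltac:(exists H; split; assumption) Hbeta ltac:(lia) Hz).
  rewrite fsum_split, plus_INR in Hper.
  assert (HF : INR K0 * c0 <= fsum K0 (fun k => A (iterS (S n + k) z))).
  { rewrite <- fsum_const. apply fsum_le. intros k Hk.
    apply Hc. rewrite iterS_app, Nat.add_0_r. apply HzF, Hk. }
  assert (Hdist := bounded_distortion M lam H A Hl HH HA (S n) 0 y z
                     ltac:(intros j Hj; symmetry; apply Hzy; lia)).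
  rewrite birkhoff_eq. simpl pow in Hdist. nra.
Qed.

Section PreorbitSupremum.

Variables (M : TM) (A : Sigma M -> R) (beta K : R).
Hypothesis birkhoff_le_K : forall n y, birkhoff A beta n y <= K.

Definition preorbit_sums (x : Sigma M) (r : R) : Prop :=
  exists n y, iterS n y = x /\ r = birkhoff A beta n y.

Lemma preorbit_sums_bound x : bound (preorbit_sums x).
Proof. exists K. intros r [n [y [_ ->]]]. apply birkhoff_le_K. Qed.

Lemma preorbit_sums_inhabited x : exists r, preorbit_sums x r.
Proof. exists 0, 0%nat, x. split; reflexivity. Qed.

Definition preorbit_sup (x : Sigma M) : R :=
  proj1_sig (completeness _ (preorbit_sums_bound x) (preorbit_sums_inhabited x)).

Lemma preorbit_sup_lub x : is_lub (preorbit_sums x) (preorbit_sup x).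
Proof. unfold preorbit_sup. exact (proj2_sig (completeness _ _ _)). Qed.

Lemma preorbit_sup_ge x n y : iterS n y = x -> birkhoff A beta n y <= preorbit_sup x.
Proof. intros Hy. apply (preorbit_sup_lub x). exists n, y. auto.
Qed.

Lemma preorbit_sup_le x b :
  (forall n y, iterS n y = x -> birkhoff A beta n y <= b) -> preorbit_sup x <= b.
Proof.
  intros Hb. apply (preorbit_sup_lub x). intros r [n [y [Hy ->]]]. apply Hb, Hy.
Qed.

Lemma preorbit_sup_nonneg x : 0 <= preorbit_sup x.
Proof. apply (preorbit_sup_ge x 0 x). reflexivity. Qed.

Lemma preorbit_sup_bounded x : Rabs (preorbit_sup x) <= K.
Proof.
  rewrite Rabs_right by (apply Rle_ge, preorbit_sup_nonneg).
  apply preorbit_sup_le. intros; apply birkhoff_le_K.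
Qed.

(** Sub-action inequality: a preimage of [x] of length [n] extends to a
    preimage of [σ x] of length [n+1], gaining [A x - β]. *)
Lemma preorbit_sup_subaction x : A x + preorbit_sup x - preorbit_sup (shift x) <= beta.
Proof.
  assert (preorbit_sup x <= preorbit_sup (shift x) - A x + beta); [|lra].
  apply preorbit_sup_le. intros n y Hy.
  pose proof (preorbit_sup_ge (shift x) (S n) y ltac:(simpl; rewrite Hy; reflexivity)) as Hge.
  unfold birkhoff in *. simpl fsum in Hge. rewrite Hy in Hge. lra.
Qed.

(** Minimality: any nonnegative [u] with [A + u - u∘σ ≤ β] dominates the
    Birkhoff sums, since they telescope to [u(σ^n y) - u y ≤ u(σ^n y)]. *)
Lemma preorbit_sup_minimal (u : Sigma M -> R) :
  (forall x, A x + u x - u (shift x) <= beta) -> (forall x, 0 <= u x) ->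
  forall x, preorbit_sup x <= u x.
Proof.
  intros Hsub Hu0 x.
  assert (Htele : forall n y, birkhoff A beta n y <= u (iterS n y) - u y).
  { unfold birkhoff. induction n as [|n IH]; intros y; simpl; [lra|].
    specialize (IH y). specialize (Hsub (iterS n y)). lra. }
  apply preorbit_sup_le. intros n y Hy. specialize (Htele n y). specialize (Hu0 y).
  rewrite Hy in Htele. lra.
Qed.

(** Hölder regularity: a preimage of [x] can be spliced onto any [x'] close
    to [x], and bounded distortion controls the change of the Birkhoff sum. *)
Lemma preorbit_sup_holder lam H :
  0 < lam < 1 -> 0 < H ->
  (forall k, (1 <= k)%nat -> forall x y, agree k x y -> A x - A y <= H * lam ^ k) ->
  locally_holder lam preorbit_sup.
Proof.
  intros Hl HH HA. exists (H * (lam / (1 - lam))).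
  split; [apply Rmult_lt_0_compat; [exact HH | apply Rdiv_lt_0_compat; lra]|].
  intros k Hk x x' Hxx.
  assert (preorbit_sup x <= preorbit_sup x' + H * lam ^ k * (lam / (1 - lam))); [|lra].
  apply preorbit_sup_le. intros n y Hy.
  assert (Hy0 : y n = x' 0%nat).
  { rewrite <- (Nat.add_0_r n), <- iterS_app, Hy. apply Hxx. lia. }
  destruct (splice M y x' n Hy0) as [y' [Hyy' Hy']].
  pose proof (preorbit_sup_ge x' n y' Hy').
  assert (fsum n (fun i => A (iterS i y)) - fsum n (fun i => A (iterS i y'))
            <= H * lam ^ k * (lam / (1 - lam))).
  { apply bounded_distortion; auto. intros j Hj. destruct (Nat.lt_ge_cases j n).
    - symmetry; auto.
    - replace j with (n + (j - n))%nat by lia. rewrite <- !iterS_app, Hy, Hy'.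
      apply Hxx. lia. }
  rewrite !birkhoff_eq in *. lra.
Qed.

End PreorbitSupremum.

Definition minimal_holder_subaction {M : TM} (lam : R) (A uA : Sigma M -> R) : Prop :=
  (forall x, 0 <= uA x) /\
  (exists B, forall x, Rabs (uA x) <= B) /\
  locally_holder lam uA /\
  (forall x, le_beta A (A x + uA x - uA (shift x))) /\
  (forall u : Sigma M -> R, sub_action A u -> (forall x, 0 <= u x) ->
     forall x, uA x <= u x).

(** Two such functions are sub-actions below each other, hence equal. *)
Lemma minimal_holder_subaction_unique {M : TM} lam (A u v : Sigma M -> R) :
  0 < lam < 1 -> minimal_holder_subaction lam A u -> minimal_holder_subaction lam A v ->
  forall x, v x = u x.
Proof.
  intros Hl [u0 [_ [uH [uS uMin]]]] [v0 [_ [vH [vS vMin]]]] x. apply Rle_antisym.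
  - apply vMin; [split; [apply (holder_continuous lam)|]|]; assumption.
  - apply uMin; [split; [apply (holder_continuous lam)|]|]; assumption.
Qed.

(** Degenerate case ([β_A = +∞] or [Sigma M] empty): the constraint is void
    and [0] is the minimal sub-action. *)
Lemma zero_minimal_holder_subaction {M : TM} lam (A : Sigma M -> R) :
  0 <= lam -> (forall x : Sigma M, forall t, le_beta A t) ->
  minimal_holder_subaction lam A (fun _ => 0).
Proof.
  intros Hl Hvoid. split; [|split; [|split; [|split]]].
  - intros; lra.
  - exists 0. intros; rewrite Rabs_R0; lra.
  - exists 1. split; [lra|]. intros k _ x y _. rewrite Rminus_diag, Rmult_1_l. apply pow_le; lra.
  - intros x. apply Hvoid, x.
  - intros u _ Hu x. apply Hu.
Qed.

Lemma le_beta_lub {M : TM} (A : Sigma M -> R) beta t :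
  is_lub (BetaSet A) beta -> (le_beta A t <-> t <= beta).
Proof.
  intros [Hub Hleast]. split.
  - intros Ht. apply Ht, Hub.
  - intros Ht b Hb. specialize (Hleast b Hb). lra.
Qed.

(** On a nonempty primitive shift there are periodic orbits, so [BetaSet A]
    is inhabited. *)
Lemma BetaSet_inhabited (M : TM) lam F K0 (A : Sigma M -> R) (x0 : Sigma M) :
  0 < lam < 1 -> primitive_with M F K0 -> locally_holder lam A -> exists r, BetaSet A r.
Proof.
  intros Hl Hpr HA. destruct (closing M F K0 x0 1 Hpr ltac:(lia)) as [z [Hz _]].
  eexists. exact (periodic_average_in_BetaSet lam (1 + K0) z A Hl HA ltac:(lia) Hz).
Qed.

Lemma preorbit_sup_minimal_holder_subaction (M : TM) lam F K0 (A : Sigma M -> R) beta :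
  0 < lam < 1 -> primitive_with M F K0 -> locally_holder lam A ->
  (exists c, forall x : Sigma M, F (x 0%nat) -> c <= A x) ->
  is_lub (BetaSet A) beta ->
  exists uA, minimal_holder_subaction lam A uA.
Proof.
  intros Hl Hpr [H [HH HA]] [c0 Hc0] Hlub.
  assert (Hbounded := birkhoff_bounded M lam F K0 A H c0 beta Hl HH Hpr HA Hc0
                        ltac:(intros r Hr; apply Hlub, Hr)).
  set (uA := preorbit_sup M A beta _ Hbounded).
  exists uA. split; [|split; [|split; [|split]]].
  - apply preorbit_sup_nonneg.
  - eexists. apply preorbit_sup_bounded.
  - apply preorbit_sup_holder with (H := H); assumption.
  - intros x. apply (proj2 (le_beta_lub A beta _ Hlub)), preorbit_sup_subaction.
  - intros u [_ Hsub] Hu0. apply preorbit_sup_minimal; [|exact Hu0].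
    intros x. apply (proj1 (le_beta_lub A beta _ Hlub)), Hsub.
Qed.

Theorem mainTheorem4 (M : TM) (lam : R) (F : nat -> Prop) (K0 : nat)
  (A : Sigma M -> R) :
  0 < lam < 1 ->
  primitive_with M F K0 ->
  (exists C, forall x, A x <= C) ->
  locally_holder lam A ->
  (exists c, forall x : Sigma M, F (x 0%nat) -> c <= A x) ->
  let P := fun uA : Sigma M -> R =>
    (forall x, 0 <= uA x) /\
    (exists B, forall x, Rabs (uA x) <= B) /\
    locally_holder lam uA /\
    (forall x, le_beta A (A x + uA x - uA (shift x))) /\
    (forall u : Sigma M -> R, sub_action A u -> (forall x, 0 <= u x) ->
       forall x, uA x <= u x) in
  exists uA, P uA /\ forall v, P v -> forall x, v x = uA x.
Proof.
  intros Hl Hpr _ HA Hc P.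
  change (exists uA, minimal_holder_subaction lam A uA /\
            forall v, minimal_holder_subaction lam A v -> forall x, v x = uA x).
  assert (Hexists : exists uA, minimal_holder_subaction lam A uA).
  { destruct (classic ((exists b, is_upper_bound (BetaSet A) b) /\ inhabited (Sigma M)))
      as [[Hbound [x0]]|Hdegenerate].
    - destruct (completeness _ Hbound (BetaSet_inhabited M lam F K0 A x0 Hl Hpr HA))
        as [beta Hlub].
      exact (preorbit_sup_minimal_holder_subaction M lam F K0 A beta Hl Hpr HA Hc Hlub).
    - exists (fun _ => 0). apply zero_minimal_holder_subaction; [lra|].
      intros x t b Hb. exfalso. apply Hdegenerate. split; [exists b; exact Hb | exact (inhabits x)]. }
  destruct Hexists as [uA HuA]. exists uA. split; [exact HuA|].
  intros v Hv. apply (minimal_holder_subaction_unique lam A uA v Hl HuA Hv).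
Qed.
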